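(* Let $G$ be a finite group, $\mathcal H$ a finite-dimensional Hilbert space, $\rho$ a state on $\mathcal H$, $\epsilon\ge0$, and let $f:G\to\mathscr U(\mathcal H)$ be an $(\epsilon,\rho)$-homomorphism. Suppose $S\le G$ is a subgroup such that $f(sg)=f(s)f(g)$ for all $s\in S$, $g\in G$. Then $f|_S$ is a representation of $S$, and there exist a finite-dimensional Hilbert space $\mathcal K$, an isometry $V:\mathcal H\to\mathcal K$ and a representation $\phi:G\to\mathscr U(\mathcal K)$ such that $$\|Vf(g)-\phi(g)V\|_\rho^2\le\epsilon\quad\text{for all } g\in G,$$ and every irreducible component $\xi$ of $\phi$ satisfies $\widehat{f|_S}(\xi|_S)\neq0$.
   Context: $\mathscr U(\mathcal H)$ is the unitary group of $\mathcal H$. For a state $\rho$ on $\mathcal H$ and a linear map $T$ from $\mathcal H$ to some Hilbert space, $\|T\|_\rho=\sqrt{\mathrm{Tr}(T^*T\rho)}$. A function $f:G\to\mathscr U(\mathcal H)$ is an $(\epsilon,\rho)$-homomorphism if for every $g\in G$, $\frac1{|G|}\sum_{h\in G}\|f(h)f(g)-f(hg)\|_\rho^2\le\epsilon$. For a finite group $S$, a function $u:S\to\mathscr U(\mathcal H)$, and a unitary representation $\xi:S\to\mathscr U(\mathbb C^d)$, the Fourier transform is $\hat u(\xi)=\frac1{|S|}\sum_{s\in S}u(s)\otimes\overline{\xi(s)}$ on $\mathcal H\otimes\mathbb C^d$, where $\overline{\xi(s)}$ is the entrywise complex conjugate in the standard basis. An irreducible component of a representation $\phi$ of $G$ is an irreducible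 representation appearing in a decomposition of $\phi$ (up to unitary equivalence) as a direct sum of irreducibles. *)

From HB Require Import structures.
From mathcomp Require Import all_boot all_order all_algebra all_fingroup all_field all_character.
Set Implicit Arguments. Unset Strict Implicit. Unset Printing Implicit Defensive.
Import Order.TTheory GRing.Theory Num.Theory Num.Def.
Local Open Scope ring_scope.
Local Open Scope sesquilinear_scope.

(* Conventions: a finite-dimensional Hilbert space is C^n (C = algC), operators
   are matrices acting on COLUMN vectors, A^t* is the conjugate transpose. *)

Definition adjmx (m n : nat) (A : 'M[algC]_(m, n)) : 'M[algC]_(n, m) := A ^t*.

Definition is_state (n : nat) (rho : 'M[algC]_n) : Prop :=
  [/\ adjmx rho = rho,
      (forall v : 'cV[algC]_n, 0 <= (adjmx v *m rho *m v) 0 0)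
    & \tr rho = 1].

Definition rho_norm2 (m n : nat) (rho : 'M[algC]_n) (T : 'M[algC]_(m, n)) : algC :=
  \tr (adjmx T *m T *m rho).

Definition is_isometry (k n : nat) (V : 'M[algC]_(k, n)) : Prop :=
  adjmx V *m V = 1%:M.

Definition unitary (n : nat) (U : 'M[algC]_n) : Prop :=
  U \is unitarymx /\ adjmx U *m U = 1%:M.

Definition unitary_rep (gT : finGroupType) (G : {set gT}) (n : nat)
  (r : gT -> 'M[algC]_n) : Prop :=
  (forall g, g \in G -> unitary (r g)) /\
  (forall g h, g \in G -> h \in G -> r (g * h)%g = r g *m r h).

(* irreducible unitary representation: nonzero space, and no invariant subspace
   (column space of U) other than 0 and the whole space *)
Definition irreducible_rep (gT : finGroupType) (G : {set gT}) (d : nat)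
  (xi : gT -> 'M[algC]_d) : Prop :=
  [/\ unitary_rep G xi, (0 < d)%N &
      forall U : 'M[algC]_d,
        (forall g, g \in G -> exists Y : 'M[algC]_d, xi g *m U = U *m Y) ->
        U = 0 \/ \rank U = d].

Definition eps_rho_hom (gT : finGroupType) (n : nat) (eps : algC)
  (rho : 'M[algC]_n) (f : gT -> 'M[algC]_n) : Prop :=
  forall g : gT,
    #|[set: gT]|%:R^-1 * (\sum_(h : gT) rho_norm2 rho (f h *m f g - f (h * g)%g))
      <= eps.

(* xi (on C^d) is an irreducible component of phi (on C^k): phi is unitarily
   equivalent to a direct sum of irreducibles xs i, realised by isometries W i
   with pairwise orthogonal ranges summing to the whole space and intertwining
   phi with xs i, and xi is unitarily equivalent to one of the xs i. *)
Definition is_component (gT : finGroupType) (G : {set gT}) (k : nat)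
  (phi : gT -> 'M[algC]_k) (d : nat) (xi : gT -> 'M[algC]_d) : Prop :=
  exists (m : nat) (dd : 'I_m -> nat)
         (xs : forall i : 'I_m, gT -> 'M[algC]_(dd i))
         (W : forall i : 'I_m, 'M[algC]_(k, dd i)),
    [/\ (forall i, irreducible_rep G (xs i)) /\ (forall i, is_isometry (W i)),
        forall i j, i != j -> adjmx (W i) *m W j = 0,
        \sum_(i < m) W i *m adjmx (W i) = 1%:M,
        forall i g, g \in G -> phi g *m W i = W i *m xs i g &
        exists i : 'I_m, exists U : 'M[algC]_(dd i, d),
          [/\ is_isometry U, U *m adjmx U = 1%:M &
              forall g, g \in G -> xs i g *m U = U *m xi g]].

Definition fourier (gT : finGroupType) (S : {set gT}) (n d : nat)
  (u : gT -> 'M[algC]_n) (xi : gT -> 'M[algC]_d) : 'M[algC]_(n * d) :=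
  #|S|%:R^-1 *: \sum_(s in S) tprod (u s) (map_mx conjC (xi s)).

From HB Require Import structures.
From mathcomp Require Import all_boot all_order all_algebra all_fingroup all_field all_character.
Set Implicit Arguments. Unset Strict Implicit. Unset Printing Implicit Defensive.
Import Order.TTheory GRing.Theory Num.Theory.
Local Open Scope ring_scope.
Local Open Scope sesquilinear_scope.

(* Let N = |G| and c = N^(-1/2).  On K = C^n (x) C[G] (basis (a, x)) take the
   right regular representation R(g) = 1 (x) rho_reg(g) and the isometry
   V0 = stack of the blocks c f(x), x in G.  Block x of V0 f(g) - R(g) V0 is
   c (f(x) f(g) - f(xg)), so ||V0 f(g) - R(g) V0||_rho^2 is exactly the
   average defect of f at g, which is <= eps.  To control the components,
   compress R to the smallest invariant subspace containing the range of V0: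
   the column space of the orbit span A, whose columns are those of the
   R(y) V0.  With E^* an orthonormal basis of it, V = E V0 and
   phi(g) = E R(g) E^* satisfy the first three claims.  A component xi of phi
   yields a nonzero intertwiner Z from xi into R with range in A; evaluating
   at the identity coordinate gives an intertwiner from xi|_S to f|_S (as f is
   exactly multiplicative on S x G), nonzero because the R(g)-translates
   separate points, and such an intertwiner forces a nonzero Fourier
   coefficient of f|_S at xi. *)

Lemma adjmxM (m p q : nat) (A : 'M[algC]_(m, p)) (B : 'M[algC]_(p, q)) :
  (A *m B)^t* = B^t* *m A^t*.
Proof. by rewrite trmx_mul map_mxM. Qed.

Lemma unitary_of_adj (k : nat) (U : 'M[algC]_k) : U^t* *m U = 1%:M -> unitary U.
Proof. by move=> UU; split=> //; apply/unitarymxP; exact: mulmx1C. Qed.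

Lemma rho_norm2_compress (k m n : nat) (rho : 'M[algC]_n) (E : 'M[algC]_(k, m))
    (M : 'M[algC]_(m, n)) :
  E^t* *m E *m M = M -> rho_norm2 rho (E *m M) = rho_norm2 rho M.
Proof.
move=> EM; rewrite /rho_norm2 /adjmx adjmxM -!mulmxA (mulmxA (E^t*)).
by rewrite (mulmxA (E^t* *m E)) EM !mulmxA.
Qed.

Lemma orthonormal_range_basis (K p : nat) (A : 'M[algC]_(K, p)) :
  exists (m : nat) (E : 'M[algC]_(m, K)),
    [/\ E *m E^t* = 1%:M, exists Y, A = E^t* *m Y & exists X, E^t* = A *m X].
Proof.
pose E := schmidt (row_base (A^t*)); exists (\rank (A^t*)), E; split.
- by apply/unitarymxP; apply: schmidt_unitarymx; exact: rank_leq_col.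
- have /submxP[Y AY] : (A^t* <= E)%MS.
    by apply: submx_trans (schmidt_sub _); rewrite eq_row_base.
  by exists (Y^t*); rewrite -adjmxM -AY trmxCK.
- have /submxP[X EX] : (E <= A^t*)%MS.
    by rewrite /E eqmx_schmidt_free ?row_base_free // eq_row_base.
  by exists (X^t*); rewrite EX adjmxM trmxCK.
Qed.

Lemma trace_delta (m p : nat) (A : 'M[algC]_(m, p)) (k : 'I_p) (i : 'I_m) :
  \tr (A *m delta_mx k i) = A i k.
Proof.
rewrite /mxtrace (bigD1 i) //= big1 ?addr0.
  rewrite mxE (bigD1 k) //= mxE !eqxx mulr1 big1 ?addr0 // => u /negbTE nu.
  by rewrite mxE nu mulr0.
move=> t /negbTE nt; rewrite mxE big1 // => u _.
by rewrite mxE nt andbF mulr0.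
Qed.

Lemma fourier_eq0_coef (gT : finGroupType) (S : {group gT}) (n d : nat)
    (u : gT -> 'M[algC]_n) (xi : gT -> 'M[algC]_d) :
  fourier S u xi = 0 ->
  forall i k j l, \sum_(s in S) u s i k * (xi s j l)^* = 0.
Proof.
move=> u_xi0 i k j l.
have S0 : #|S|%:R != 0 :> algC by rewrite pnatr_eq0 -lt0n cardG_gt0.
have := congr1 (fun X => \tr (X *m tprod (delta_mx k i) (delta_mx l j))) u_xi0.
rewrite /= mul0mx mxtrace0 /fourier -scalemxAl mxtraceZ mulmx_suml raddf_sum /=.
under eq_bigr => s _ do rewrite -tprodE mxtrace_prod !trace_delta mxE.
by move/eqP; rewrite mulf_eq0 invr_eq0 (negbTE S0) /= => /eqP.
Qed.

(* Schur-type criterion: a nonzero intertwiner M (M xi(s) = u(s) M on S) with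
   xi unitary on S forces a nonzero Fourier transform, since
   M = 1/|S| sum_s u(s) M xi(s)^* is a linear image of the transform. *)
Lemma intertwiner_fourier_neq0 (gT : finGroupType) (S : {group gT}) (n d : nat)
    (u : gT -> 'M[algC]_n) (xi : gT -> 'M[algC]_d) (M : 'M[algC]_(n, d)) :
  (forall s, s \in S -> M *m xi s = u s *m M) ->
  (forall s, s \in S -> xi s *m (xi s)^t* = 1%:M) -> M != 0 ->
  fourier S u xi != 0.
Proof.
move=> M_int xi_unit; apply: contra => /eqP/fourier_eq0_coef u_xi0.
have S0 : #|S|%:R != 0 :> algC by rewrite pnatr_eq0 -lt0n cardG_gt0.
apply/eqP/matrixP => i j; rewrite mxE.
have -> : M i j = #|S|%:R^-1 * \sum_(s in S) (u s *m M *m (xi s)^t*) i j.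
  under eq_bigr => s sS do rewrite -M_int // -mulmxA xi_unit // mulmx1.
  by rewrite sumr_const -(mulr_natl (M i j)) mulrA mulVf // mul1r.
apply/eqP; rewrite mulf_eq0; apply/orP; right; apply/eqP.
under eq_bigr => s _ do rewrite mxE.
under eq_bigr => s _ do under eq_bigr => l _ do rewrite !mxE mulr_suml.
rewrite exchange_big /= big1 // => l _; rewrite exchange_big /= big1 // => k _.
under eq_bigr => s _ do rewrite -mulrA (mulrC (M k l)) mulrA.
by rewrite -mulr_suml u_xi0 mul0r.
Qed.

(* An irreducible component xi of phi is unitary and admits a nonzero
   intertwiner W : phi g W = W xi g, namely the embedding of its summand. *)
Lemma component_intertwiner (gT : finGroupType) (G : {set gT}) (k d : nat)
    (phi : gT -> 'M[algC]_k) (xi : gT -> 'M[algC]_d) :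
  is_component G phi xi ->
  (forall g, g \in G -> xi g *m (xi g)^t* = 1%:M) /\
  exists2 W : 'M[algC]_(k, d), W != 0 & forall g, g \in G -> phi g *m W = W *m xi g.
Proof.
move=> [m [dd [xs [W [[xs_irr W_iso] _ _ W_int [i [U [U_iso U_co U_int]]]]]]]].
have [[xs_unit _] d_gt0 _] := xs_irr i.
split=> [g gG|].
  have xiE : xi g = U^t* *m xs i g *m U.
    by rewrite -mulmxA U_int // mulmxA U_iso mul1mx.
  have /unitarymxP xsU := (xs_unit g gG).1.
  rewrite xiE !adjmxM trmxCK -!mulmxA (mulmxA U) U_co mul1mx (mulmxA (xs i g)).
  by rewrite xsU mul1mx U_iso.
exists (W i *m U) => [|g gG]; last by rewrite mulmxA W_int // -!mulmxA U_int.
apply: contraTneq (oner_neq0 algC) => WU0.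
have U0 : U = 0 by rewrite -[U]mul1mx -(W_iso i) -mulmxA WU0 mulmx0.
have /matrixP/(_ (Ordinal d_gt0) (Ordinal d_gt0)) := U_co.
by rewrite U0 mul0mx !mxE eqxx => /esym/eqP; rewrite oner_eq0.
Qed.

(* Restriction of a unitary representation R on C^K to an invariant subspace:
   the subspace is the column space of A, R g A = A P_g, and the columns of
   E^* form an orthonormal basis of it. *)
Section Compression.

Variables (gT : finGroupType) (K m p : nat).
Variables (R : gT -> 'M[algC]_K) (A : 'M[algC]_(K, p)) (E : 'M[algC]_(m, K)).
Hypothesis E_orthonormal : E *m E^t* = 1%:M.
Hypothesis A_in_E : exists Y, A = E^t* *m Y.
Hypothesis E_in_A : exists X, E^t* = A *m X.
Hypothesis R_invariant : forall g, exists P, R g *m A = A *m P.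

Definition compress (g : gT) : 'M[algC]_m := E *m R g *m E^t*.

Lemma proj_range (q : nat) (M : 'M[algC]_(p, q)) : E^t* *m E *m (A *m M) = A *m M.
Proof.
by have [Y ->] := A_in_E; rewrite -!mulmxA (mulmxA E) E_orthonormal mul1mx.
Qed.

Lemma proj_R_range (g : gT) (q : nat) (M : 'M[algC]_(p, q)) :
  E^t* *m E *m (R g *m (A *m M)) = R g *m (A *m M).
Proof.
by have [P RA] := R_invariant g; rewrite (mulmxA (R g)) RA -(mulmxA A) proj_range.
Qed.

Lemma proj_R_basis (g : gT) : E^t* *m E *m (R g *m E^t*) = R g *m E^t*.
Proof. by have [X EX] := E_in_A; rewrite {2 3}EX proj_R_range. Qed.

Hypothesis R_mul : forall g h, R g *m R h = R (g * h)%g.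
Hypothesis R_1 : R 1%g = 1%:M.
Hypothesis R_adj : forall g, (R g)^t* = R g^-1%g.

Lemma compress_rep : unitary_rep [set: gT] compress.
Proof.
have compressM g h : compress g *m compress h = compress (g * h)%g.
  by rewrite /compress -!mulmxA (mulmxA (E^t*) E) proj_R_basis (mulmxA (R g)) R_mul.
split=> [g _|g h _ _]; last by rewrite compressM.
apply: unitary_of_adj.
have -> : (compress g)^t* = compress g^-1%g.
  by rewrite /compress !adjmxM trmxCK R_adj mulmxA.
by rewrite compressM mulVg /compress R_1 mulmx1 E_orthonormal.
Qed.

Lemma compress_intertwiner (d : nat) (W : 'M[algC]_(m, d)) (xi : gT -> 'M[algC]_d)
    (g : gT) :
  compress g *m W = W *m xi g -> R g *m (E^t* *m W) = E^t* *m W *m xi g.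
Proof.
move=> Wg; rewrite -mulmxA -Wg /compress !mulmxA.
by rewrite -(mulmxA (E^t* *m E) (R g)) proj_R_basis.
Qed.

End Compression.

Definition sel_mx (m : nat) (J : finType) (sigma : 'I_m -> J) : 'M[algC]_(m, #|J|) :=
  \matrix_(i, j) (enum_val j == sigma i)%:R.

Lemma sel_mxM (m p : nat) (J : finType) (sigma : 'I_m -> J) (M : 'M[algC]_(#|J|, p)) i j :
  (sel_mx sigma *m M) i j = M (enum_rank (sigma i)) j.
Proof.
rewrite !mxE (bigD1 (enum_rank (sigma i))) //= mxE enum_rankK eqxx mul1r.
rewrite big1 ?addr0 // => l /negbTE ne_l.
by rewrite mxE -[sigma i]enum_rankK (can_eq enum_valK) ne_l mul0r.
Qed.

Lemma mul_tr_sel_mx (m p : nat) (J : finType) (sigma : 'I_m -> J)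
    (M : 'M[algC]_(p, #|J|)) i j :
  (M *m (sel_mx sigma)^T) i j = M i (enum_rank (sigma j)).
Proof. by rewrite -[M]trmxK -trmx_mul mxE sel_mxM trmxK mxE. Qed.

(* The right regular representation of gT tensored with C^n, on the space
   C^K with basis indexed by pairs (a, x) in 'I_n * gT. *)
Section Regular.

Variables (gT : finGroupType) (n : nat).
Local Notation K := #|{: 'I_n * gT}|.

Definition regular (g : gT) : 'M[algC]_K :=
  sel_mx (fun i : 'I_K => ((enum_val i).1, ((enum_val i).2 * g)%g)).

Lemma regularM (g h : gT) : regular g *m regular h = regular (g * h)%g.
Proof. by apply/matrixP => i j; rewrite sel_mxM !mxE enum_rankK /= mulgA. Qed.

Lemma regular1 : regular 1%g = 1%:M.
Proof.
apply/matrixP => i j; rewrite !mxE mulg1 -surjective_pairing.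
by rewrite -(can_eq enum_rankK) !enum_valK eq_sym.
Qed.

Lemma regular_adj (g : gT) : (regular g)^t* = regular g^-1%g.
Proof.
apply/matrixP => i j; rewrite !mxE conjC_nat.
case: (enum_val i) => a x; case: (enum_val j) => b y /=.
apply/congr1/congr1.
by apply/eqP/eqP => -[-> ->]; rewrite ?mulgK ?mulgKV.
Qed.

Definition eval1 : 'M[algC]_(n, K) := sel_mx (fun a : 'I_n => (a, 1%g)).

Lemma eval1_regular_eq0 (p : nat) (M : 'M[algC]_(K, p)) :
  (forall g, eval1 *m (regular g *m M) = 0) -> M = 0.
Proof.
move=> M0; apply/matrixP => i j.
move/matrixP: (M0 (enum_val i).2) => /(_ (enum_val i).1 j).
by rewrite sel_mxM sel_mxM enum_rankK /= mul1g -surjective_pairing enum_valK !mxE.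
Qed.

Definition stack (c : algC) (D : gT -> 'M[algC]_n) : 'M[algC]_(K, n) :=
  \matrix_(i, b) (c * D (enum_val i).2 (enum_val i).1 b).

Lemma stack_adjM (c : algC) (D : gT -> 'M[algC]_n) :
  (stack c D)^t* *m stack c D = (c^* * c) *: \sum_x (D x)^t* *m D x.
Proof.
apply/matrixP => b b'; rewrite !mxE summxE mulr_sumr.
pose F t := (c * D t.2 t.1 b)^* * (c * D t.2 t.1 b').
transitivity (\sum_(i < K) F (enum_val i)).
  by apply: eq_bigr => i _; rewrite !mxE.
rewrite -(big_enum_val F) -(pair_bigA _ (fun a x => F (a, x))) exchange_big /=.
apply: eq_bigr => x _; rewrite !mxE mulr_sumr; apply: eq_bigr => a _.
by rewrite !mxE /F /= rmorphM mulrACA.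
Qed.

Lemma stack_mulmx (c : algC) (D : gT -> 'M[algC]_n) (B : 'M[algC]_n) :
  stack c D *m B = stack c (fun x => D x *m B).
Proof.
apply/matrixP => i b; rewrite !mxE mulr_sumr.
by apply: eq_bigr => l _; rewrite !mxE mulrA.
Qed.

Lemma regular_stack (c : algC) (D : gT -> 'M[algC]_n) (g : gT) :
  regular g *m stack c D = stack c (fun x => D (x * g)%g).
Proof. by apply/matrixP => i b; rewrite sel_mxM !mxE enum_rankK. Qed.

Lemma stackB (c : algC) (D D' : gT -> 'M[algC]_n) :
  stack c D - stack c D' = stack c (fun x => D x - D' x).
Proof. by apply/matrixP => i b; rewrite !mxE mulrBr. Qed.

Lemma stack_isometry (c : algC) (f : gT -> 'M[algC]_n) :
  c^* * c = #|gT|%:R^-1 -> (forall x, unitary (f x)) ->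
  (stack c f)^t* *m stack c f = 1%:M.
Proof.
move=> cc f_unit; rewrite stack_adjM cc.
under eq_bigr => x _ do rewrite (f_unit x).2.
rewrite sumr_const -scaler_nat scalerA mulVf ?scale1r // pnatr_eq0 -lt0n.
by apply/card_gt0P; exists 1%g.
Qed.

Lemma rho_norm2_stack (rho : 'M[algC]_n) (c : algC) (D : gT -> 'M[algC]_n) :
  rho_norm2 rho (stack c D) = c^* * c * \sum_x rho_norm2 rho (D x).
Proof.
by rewrite /rho_norm2 /adjmx stack_adjM -scalemxAl mxtraceZ mulmx_suml raddf_sum.
Qed.

(* The span of all translates of the stack of f: its column (b, y) is column
   b of regular y *m stack c f. *)
Definition orbit_span (c : algC) (f : gT -> 'M[algC]_n) : 'M[algC]_K :=
  \matrix_(i, j) (c * f ((enum_val i).2 * (enum_val j).2)%g (enum_val i).1 (enum_val j).1).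

Lemma stack_orbit_span (c : algC) (f : gT -> 'M[algC]_n) :
  stack c f = orbit_span c f *m eval1^T.
Proof. by apply/matrixP => i b; rewrite mul_tr_sel_mx !mxE enum_rankK /= mulg1. Qed.

Lemma regular_orbit_span (c : algC) (f : gT -> 'M[algC]_n) (h : gT) :
  regular h *m orbit_span c f =
  orbit_span c f *m (sel_mx (fun j : 'I_K => ((enum_val j).1, (h * (enum_val j).2)%g)))^T.
Proof.
by apply/matrixP => i j; rewrite mul_tr_sel_mx sel_mxM !mxE !enum_rankK /= mulgA.
Qed.

Lemma eval1_regular_orbit_span (c : algC) (f : gT -> 'M[algC]_n) (S : {group gT}) s :
  (forall s g, s \in S -> f (s * g)%g = f s *m f g) -> s \in S ->
  eval1 *m (regular s *m orbit_span c f) = f s *m (eval1 *m orbit_span c f).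
Proof.
move=> f_S sS; apply/matrixP => a j; rewrite sel_mxM sel_mxM !mxE !enum_rankK /=.
rewrite mul1g f_S // mxE mulr_sumr; apply: eq_bigr => l _.
by rewrite sel_mxM !mxE enum_rankK /= mul1g mulrCA.
Qed.

End Regular.

(* A nonzero intertwiner Z from xi into the regular representation, with
   range in the orbit span, evaluates at 1 to a nonzero intertwiner from
   xi|_S to f|_S; hence the Fourier transform of f|_S at xi is nonzero. *)
Lemma orbit_span_fourier (gT : finGroupType) (n d : nat) (c : algC)
    (f : gT -> 'M[algC]_n) (S : {group gT}) (xi : gT -> 'M[algC]_d)
    (X : 'M[algC]_(#|{: 'I_n * gT}|, d)) :
  (forall s g, s \in S -> f (s * g)%g = f s *m f g) ->
  (forall s, s \in S -> xi s *m (xi s)^t* = 1%:M) ->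
  (forall g, regular n g *m (orbit_span c f *m X) = orbit_span c f *m X *m xi g) ->
  orbit_span c f *m X != 0 ->
  fourier S f xi != 0.
Proof.
move=> f_S xi_unit; set Z := orbit_span c f *m X => Z_int Z_neq0.
apply: (intertwiner_fourier_neq0 (M := eval1 gT n *m Z)) xi_unit _ => [s sS|].
  rewrite -mulmxA -Z_int !mulmxA -(mulmxA _ (regular n s)).
  by rewrite (eval1_regular_orbit_span _ f_S sS) !mulmxA.
apply: contra Z_neq0 => /eqP eval_Z0; apply/eqP/eval1_regular_eq0 => g.
by rewrite Z_int mulmxA eval_Z0 mul0mx.
Qed.

Theorem theorem4p1 (gT : finGroupType) (n : nat) (rho : 'M[algC]_n)
  (eps : algC) (f : gT -> 'M[algC]_n) (S : {group gT}) :
  is_state rho -> 0 <= eps ->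
  (forall g, unitary (f g)) ->
  eps_rho_hom eps rho f ->
  (forall s g, s \in S -> f (s * g)%g = f s *m f g) ->
  unitary_rep S f /\
  exists (k : nat) (V : 'M[algC]_(k, n)) (phi : gT -> 'M[algC]_k),
    [/\ is_isometry V, unitary_rep [set: gT] phi,
        forall g, rho_norm2 rho (V *m f g - phi g *m V) <= eps &
        forall (d : nat) (xi : gT -> 'M[algC]_d),
          is_component [set: gT] phi xi -> fourier S f xi != 0].
Proof.
move=> _ _ f_unit f_hom f_S.
split; first by split=> [g _|g h gS _]; [exact: f_unit | exact: f_S].
pose c := sqrtC (#|gT|%:R^-1 : algC).
have cc : c^* * c = #|gT|%:R^-1.
  by rewrite geC0_conj ?sqrtC_ge0 ?invr_ge0 ?ler0n // -expr2 sqrtCK.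
pose A := orbit_span c f.
have [k [E [E_on A_in_E E_in_A]]] := orthonormal_range_basis A.
have R_inv h : exists P, regular n h *m A = A *m P.
  by eexists; exact: regular_orbit_span.
have V0_range : E^t* *m E *m stack c f = stack c f.
  by rewrite stack_orbit_span (proj_range E_on A_in_E).
exists k, (E *m stack c f), (compress (regular n) E); split.
- rewrite /is_isometry /adjmx adjmxM -mulmxA (mulmxA (E^t*)) V0_range.
  exact: stack_isometry.
- exact: (compress_rep E_on A_in_E E_in_A R_inv
            (regularM n) (regular1 gT n) (regular_adj n)).
- move=> g; pose D x := f x *m f g - f (x * g)%g.
  have D_stack : stack c f *m f g - regular n g *m stack c f = stack c D.
    by rewrite stack_mulmx regular_stack stackB.
  have D_range : E^t* *m E *m stack c D = stack c D.
    rewrite -D_stack mulmxBr stack_orbit_span -mulmxA (proj_range E_on A_in_E).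
    by rewrite (proj_R_range E_on A_in_E R_inv).
  rewrite /compress -!mulmxA (mulmxA (E^t*) E) V0_range -mulmxBr D_stack.
  rewrite rho_norm2_compress // rho_norm2_stack cc -cardsT; exact: f_hom.
- move=> d xi /component_intertwiner[xi_unit [W W_neq0 W_int]].
  have [X EX] := E_in_A.
  have xi_unit_S s : s \in S -> xi s *m (xi s)^t* = 1%:M.
    by move=> _; exact: xi_unit (in_setT s).
  apply: (orbit_span_fourier (c := c) (X := X *m W) f_S xi_unit_S).
  + move=> g; rewrite (mulmxA A) -EX.
    exact: (compress_intertwiner E_on A_in_E E_in_A R_inv (W_int g (in_setT g))).
  + rewrite (mulmxA A) -EX; apply: contra W_neq0 => /eqP EW0.
    by rewrite -[W]mul1mx -E_on -mulmxA EW0 mulmx0.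
Qed.
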